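(* Let $B$ be a nonzero real vector space, $\lfloor\cdot,\cdot\rfloor$ a symmetric bilinear form on $B$, $q(b):=\tfrac12\lfloor b,b\rfloor$. Let $\rho\colon B\to B$ be a linear surjection such that $\lfloor\rho(b),\rho(c)\rfloor=\lfloor b,-c\rfloor$ for all $b,c\in B$, and let $g$ be a BC--function on $B$. Then $g\circ\rho$ and $g\circ(-\rho)$ are TBC--functions, $\rho\,\mathrm{dom}\,(g\circ\rho)=\mathrm{dom}\,g$, $\rho\,{\cal N}_q(g\circ\rho)={\cal P}_q(g)$, $-\rho\,\mathrm{dom}\,(g\circ(-\rho))=\mathrm{dom}\,g$ and $-\rho\,{\cal N}_q(g\circ(-\rho))={\cal P}_q(g)$.
   Context: For a proper convex $f\colon B\to\,]{-}\infty,\infty]$, $\mathrm{dom}\,f:=\{b\colon f(b)\in\mathbb{R}\}$ and $f^@(c):=\sup_{b\in B}[\lfloor b,c\rfloor-f(b)]$. A BC--function is a proper convex $f$ with $f^@(b)\ge f(b)\ge q(b)$ for all $b$; a TBC--function is a proper convex $g$ with $g^@(-b)\ge g(b)\ge -q(b)$ for all $b$. For $h\ge q$, ${\cal P}_q(h):=\{b\colon h(b)=q(b)\}$; for $h\ge -q$, ${\cal N}_q(h):=\{b\colon h(b)=-q(b)\}$. *)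

From HB Require Import structures.
From mathcomp Require Import all_boot all_order all_algebra.
From mathcomp Require Import all_classical all_reals.
From mathcomp Require Import ereal.
Set Implicit Arguments. Unset Strict Implicit. Unset Printing Implicit Defensive.
Import Order.TTheory GRing.Theory Num.Theory.
Local Open Scope classical_set_scope.
Local Open Scope ring_scope.

Section Defs.
Variables (R : realType) (B : lmodType R).

Definition symmetric_bilinear (bf : B -> B -> R) : Prop :=
  (forall b c, bf b c = bf c b) /\
  (forall a b b' c, bf (a *: b + b') c = a * bf b c + bf b' c) /\
  (forall a b c c', bf b (a *: c + c') = a * bf b c + bf b c').

Definition qf (bf : B -> B -> R) (b : B) : R := bf b b / 2.

Definition dom (f : B -> \bar R) : set B := [set b | f b \is a fin_num].

Definition convex_fun (f : B -> \bar R) : Prop :=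
  forall (x y : B) (t : R), 0 < t -> t < 1 ->
    (f (t *: x + (1 - t) *: y)%R <= t%:E * f x + (1 - t)%:E * f y)%E.

Definition proper_convex (f : B -> \bar R) : Prop :=
  (forall b, f b != -oo%E) /\ dom f !=set0 /\ convex_fun f.

Definition fenchel_at (bf : B -> B -> R) (f : B -> \bar R) (c : B) : \bar R :=
  ereal_sup [set ((bf b c)%:E - f b)%E | b in [set: B]].

Definition BC_fun (bf : B -> B -> R) (f : B -> \bar R) : Prop :=
  proper_convex f /\
  forall b, (fenchel_at bf f b >= f b)%E /\ (f b >= (qf bf b)%:E)%E.

Definition TBC_fun (bf : B -> B -> R) (g : B -> \bar R) : Prop :=
  proper_convex g /\
  forall b, (fenchel_at bf g (- b) >= g b)%E /\ (g b >= (- qf bf b)%:E)%E.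

Definition Pq (bf : B -> B -> R) (h : B -> \bar R) : set B :=
  [set b | h b = (qf bf b)%:E].

Definition Nq (bf : B -> B -> R) (h : B -> \bar R) : set B :=
  [set b | h b = (- qf bf b)%:E].

End Defs.

From HB Require Import structures.
From mathcomp Require Import all_boot all_order all_algebra.
From mathcomp Require Import all_classical all_reals.
From mathcomp Require Import ereal.
Import Order.TTheory GRing.Theory Num.Theory.
Local Open Scope classical_set_scope.
Local Open Scope ring_scope.

Set Implicit Arguments.
Unset Strict Implicit.

(* A surjective linear map [f] with [bf (f b) (f c) = - bf b c] negates [q],
   so precomposition with [f] turns [g >= q] into [g \o f >= -q] and [P_q(g)]
   into the preimage [N_q(g \o f)]; surjectivity identifies [(g \o f)^@ (-b)]
   with [g^@ (f b)] by reindexing the supremum, and also makes [f] map every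
   preimage onto the original set.  Both [rho] and [-rho] are such maps. *)

Section NegatedMaps.
Variables (R : realType) (B : lmodType R).

Lemma linearN_fun (f : B -> B) : linear f -> linear (fun b => - f b).
Proof. by move=> f_lin a u v; rewrite f_lin opprD scalerN. Qed.

Lemma surjN_fun (f : B -> B) :
  (forall c, exists b, f b = c) -> forall c, exists b, - f b = c.
Proof. by move=> f_surj c; have [b fb] := f_surj (- c); exists b; rewrite fb opprK. Qed.

End NegatedMaps.

Section SymmetricBilinear.
Variables (R : realType) (B : lmodType R) (bf : B -> B -> R).
Hypothesis bf_symbil : symmetric_bilinear bf.

Lemma bf0r (b : B) : bf b 0 = 0.
Proof.
have [_ [_ bfDr]] := bf_symbil.
have := bfDr 1 b 0 0; rewrite scale1r addr0 mul1r.
by move/(congr1 (fun z => z - bf b 0)); rewrite subrr addrK.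
Qed.

Lemma bfNr (b c : B) : bf b (- c) = - bf b c.
Proof.
have [_ [_ bfDr]] := bf_symbil.
by have := bfDr (-1) b c 0; rewrite addr0 scaleN1r bf0r addr0 mulN1r.
Qed.

Lemma bfNN (b c : B) : bf (- b) (- c) = bf b c.
Proof.
have [bfC _] := bf_symbil.
by rewrite bfNr bfC bfNr bfC opprK.
Qed.

Section AntiIsometry.
Variable f : B -> B.
Hypotheses (f_lin : linear f) (f_surj : forall c, exists b, f b = c)
  (f_anti : forall b c, bf (f b) (f c) = bf b (- c)).

Lemma qf_anti (b : B) : qf bf (f b) = - qf bf b.
Proof. by rewrite /qf f_anti bfNr mulNr. Qed.

Lemma image_preimage_surj (S : set B) : f @` (f @^-1` S) = S.
Proof.
apply: image_preimage; apply/seteqP; split=> // c _.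
by have [b fb] := f_surj c; exists b.
Qed.

Lemma proper_convex_comp (g : B -> \bar R) :
  proper_convex g -> proper_convex (g \o f).
Proof.
move=> [g_ninfty [[c gc] g_conv]]; split=> [b|]; first exact: g_ninfty.
split; first by have [b fb] := f_surj c; exists b; rewrite /dom /= fb.
by move=> x y t t0 t1 /=; rewrite f_lin (scalable_linear f_lin); apply: g_conv.
Qed.

Lemma fenchel_at_compN (g : B -> \bar R) (b : B) :
  fenchel_at bf (g \o f) (- b) = fenchel_at bf g (f b).
Proof.
rewrite /fenchel_at; congr ereal_sup; apply/seteqP; split=> x /=.
  by move=> [c _ <-]; exists (f c) => //; rewrite f_anti.
move=> [d _ <-]; have [c <-] := f_surj d.
by exists c => //; rewrite f_anti.
Qed.

Lemma TBC_fun_comp (g : B -> \bar R) : BC_fun bf g -> TBC_fun bf (g \o f).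
Proof.
move=> [g_proper g_BC]; split; first exact: proper_convex_comp.
move=> b; have [g_fenchel g_ge_q] := g_BC (f b).
by rewrite fenchel_at_compN /= -qf_anti.
Qed.

Lemma image_dom_comp (g : B -> \bar R) : f @` dom (g \o f) = dom g.
Proof. exact: image_preimage_surj. Qed.

Lemma image_Nq_comp (g : B -> \bar R) : f @` Nq bf (g \o f) = Pq bf g.
Proof.
rewrite -[RHS]image_preimage_surj; congr image; apply/seteqP.
by split=> b; rewrite /Nq /Pq /= qf_anti.
Qed.

End AntiIsometry.

End SymmetricBilinear.

Theorem lemma3p14 (R : realType) (B : lmodType R) (bf : B -> B -> R)
  (rho : {linear B -> B}) (g : B -> \bar R) :
  (exists b : B, b != 0) ->
  symmetric_bilinear bf ->
  (forall c : B, exists b : B, rho b = c) ->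
  (forall b c : B, bf (rho b) (rho c) = bf b (- c)) ->
  BC_fun bf g ->
  TBC_fun bf (g \o rho) /\
      TBC_fun bf (g \o (fun b => - rho b)) /\
      rho @` dom (g \o rho) = dom g /\
      rho @` Nq bf (g \o rho) = Pq bf g /\
      (fun b => - rho b) @` dom (g \o (fun b => - rho b)) = dom g /\
      (fun b => - rho b) @` Nq bf (g \o (fun b => - rho b)) = Pq bf g.
Proof.
move=> _ bf_symbil rho_surj rho_anti g_BC.
have rho_lin : linear rho by exact: linearP.
have Nrho_lin := linearN_fun rho_lin.
have Nrho_surj := surjN_fun rho_surj.
have Nrho_anti b c : bf (- rho b) (- rho c) = bf b (- c).
  by rewrite (bfNN bf_symbil) rho_anti.
split; first exact: (TBC_fun_comp bf_symbil rho_lin rho_surj rho_anti).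
split; first exact: (TBC_fun_comp bf_symbil Nrho_lin Nrho_surj Nrho_anti).
split; first exact: (image_dom_comp rho_surj).
split; first exact: (image_Nq_comp bf_symbil rho_surj rho_anti).
split; first exact: (image_dom_comp Nrho_surj).
exact: (image_Nq_comp bf_symbil Nrho_surj Nrho_anti).
Qed.
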